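(* As formal power series, $$\sum_{n=1}^{\infty}x^{e(n)}=\frac{1}{1-3x}.$$ Equivalently, for every integer $k\ge 0$, the number of positive integers $i$ with $e(i)=k$ is exactly $3^{k}$.
   Context: The Stern polynomials $B_n(t)\in\mathbb{Z}[t]$, $n\ge 0$, are defined by $B_0(t)=0$, $B_1(t)=1$, $B_{2n}(t)=tB_n(t)$ and $B_{2n+1}(t)=B_n(t)+B_{n+1}(t)$ for $n\ge 1$. For $n\ge 1$, $e(n)=\deg_t B_n(t)$. *)

From HB Require Import structures.
From mathcomp Require Import all_boot all_order all_algebra.
From Stdlib Require Import Lia.
Set Implicit Arguments. Unset Strict Implicit. Unset Printing Implicit Defensive.
Import GRing.Theory.
Local Open Scope ring_scope.

(* Stern polynomials B_n(t) in Z[t], computed with fuel (fuel n suffices for B_n):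
   B_0 = 0, B_1 = 1, B_{2m} = t B_m, B_{2m+1} = B_m + B_{m+1}. *)
Fixpoint stern_aux (f n : nat) : {poly int} :=
  match f with
  | 0 => 0
  | f'.+1 =>
    if n is 0 then 0 else
    if n == 1%N then 1 else
    if odd n then stern_aux f' n./2 + stern_aux f' (n./2).+1
    else 'X * stern_aux f' n./2
  end.

Definition stern (n : nat) : {poly int} := stern_aux n n.

(* e(n) = deg_t B_n(t)  (size p = deg p + 1 for p != 0) *)
Definition e (n : nat) : nat := (size (stern n)).-1.

Lemma half_le n : (n.+1./2 <= n)%N.
Proof.
have := odd_double_half n.+1; move: (n.+1./2) (odd n.+1) => h b.
rewrite -muln2 => E; apply/leP; case: b E => /= E;
  rewrite -?(add1n, add0n) -?multE -?plusE in E; lia.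
Qed.

Lemma half_lt n : n <> 0%N -> odd n.+1 -> ((n.+1./2).+1 <= n)%N.
Proof.
move=> n0 od; have := odd_double_half n.+1; rewrite od.
move: (n.+1./2) => h; rewrite -muln2 add1n => E; apply/leP; rewrite -?multE in E; lia.
Qed.

Lemma stern_aux_fuel f g n :
  (n <= f)%N -> (n <= g)%N -> stern_aux f n = stern_aux g n.
Proof.
elim: f g n => [|f IH] [|g] [|n] //= hf hg.
case: n hf hg => [|n] //= hf hg; have n0 : n.+1 <> 0%N by [].
have h2 : (n.+2./2 <= f)%N by apply: leq_trans (half_le n.+1) _.
have h2' : (n.+2./2 <= g)%N by apply: leq_trans (half_le n.+1) _.
case: ifP => od.
  have h3 := half_lt n0 od.
  by rewrite (IH g) ?(IH g (n.+2./2).+1) //; apply: leq_trans h3 _.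
by rewrite (IH g).
Qed.

Lemma stern0 : stern 0 = 0. Proof. by []. Qed.
Lemma stern1 : stern 1 = 1. Proof. by []. Qed.

Lemma stern_aux_S f n : stern_aux f.+1 n =
  if n is 0 then 0 else
  if n == 1%N then 1 else
  if odd n then stern_aux f n./2 + stern_aux f (n./2).+1
  else 'X * stern_aux f n./2.
Proof. by []. Qed.

Lemma stern_even n : (0 < n)%N -> stern n.*2 = 'X * stern n.
Proof.
case: n => [//|n] _; rewrite /stern doubleS stern_aux_S.
have E : (n.*2.+2 == 1%N) = false by [].
have O : odd n.*2.+2 = false by rewrite /= odd_double.
rewrite E O -doubleS doubleK (@stern_aux_fuel _ n.+1) //.
by rewrite -addnn -addnS leq_addl.
Qed.

Lemma stern_odd n : (0 < n)%N -> stern n.*2.+1 = stern n + stern n.+1.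
Proof.
case: n => [//|n] _; rewrite /stern doubleS stern_aux_S.
have E : (n.*2.+3 == 1%N) = false by [].
have O : odd n.*2.+3 = true by rewrite /= odd_double.
have H : n.*2.+3./2 = n.+1 by rewrite -[n.*2.+3]/((n.+1).*2.+1) -[X in X./2]addn1 halfD odd_double /= addn0 doubleK.
rewrite E O H (@stern_aux_fuel _ n.+1) ?(@stern_aux_fuel _ n.+2) //;
  rewrite -addnn -?addnS ?leq_addl //.
by rewrite addnS ltnS leq_addr.
Qed.

From HB Require Import structures.
From mathcomp Require Import all_boot all_order all_algebra.
From mathcomp Require Import zify.
Import GRing.Theory Num.Theory.

(* 1. Stern polynomials have nonnegative coefficients and B_n <> 0 for n >= 1;
      as no cancellation occurs in a sum of such polynomials, the degree
      satisfies e(1) = 0, e(2m) = e(m) + 1 and e(2m+1) = max(e(m), e(m+1)).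
   2. From this recursion: e is 1-Lipschitz, |e(n+1) - e(n)| <= 1, and
      n < 2 * 4^e(n), so each level set {e = k} is finite.
   3. Counting.  Let L_k(N) = #{1 <= i <= N | e i = k} and
      M_k(N) = #{1 <= i <= N | max(e i, e (i+1)) = k}.  Splitting 1..2N+1
      into 1 and the pairs (2m, 2m+1) gives the exact identities
         L_{k+1}(2N+1) = L_k(N) + M_{k+1}(N),
         M_{k+1}(2N+1) = L_k(N) + L_k(N+1)        (this one uses step 2).
      By step 2 both counts are constant once N >= 2 * 4^k, which turns these
      identities into L_{k+1} = 3 L_k; the theorem lists {e = k} by filtering
      the range 1 .. 2 * 4^k. *)

Lemma pos_half_ind (P : nat -> Prop) :
  P 1 ->
  (forall m, 0 < m -> (forall j, 0 < j -> j <= m -> P j) -> P m.*2) ->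
  (forall m, 0 < m -> (forall j, 0 < j -> j <= m.+1 -> P j) -> P m.*2.+1) ->
  forall n, 0 < n -> P n.
Proof.
move=> P1 Peven Podd n; elim/ltn_ind: n => n IH n_gt0.
have [->|n_neq1] := eqVneq n 1; first exact: P1.
have m_gt0 : 0 < n./2 by rewrite half_gt0; lia.
have n_eq := odd_double_half n; set m := n./2 in m_gt0 n_eq *.
rewrite -n_eq; case: (odd n) n_eq => /= n_eq; rewrite -muln2 in n_eq.
- by rewrite add1n; apply: Podd => // j j_gt0 le_jm; apply: IH; lia.
- by rewrite add0n; apply: Peven => // j j_gt0 le_jm; apply: IH; lia.
Qed.

Lemma even_neighbour {m : nat} : 0 < m ->
  exists2 j, 0 < j <= m & (j.*2 = m \/ j.*2 = m.+1).
Proof.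
move=> m_gt0; have := odd_double_half m.+1.
move: (odd m.+1) (m.+1./2) => b j m1_eq; exists j.
  by case: b m1_eq => /= m1_eq; rewrite -muln2 in m1_eq; lia.
by case: b m1_eq => /= m1_eq; [left | right]; rewrite -muln2 in m1_eq *; lia.
Qed.

Section SternDegree.
Local Open Scope ring_scope.

(* No cancellation: adding polynomials with nonnegative coefficients
   yields the maximal size. *)
Lemma size_add_nneg (p q : {poly int}) :
  p \is a polyOver Num.nneg -> q \is a polyOver Num.nneg ->
  size (p + q) = maxn (size p) (size q).
Proof.
have size_le (a b : {poly int}) :
    a \is a polyOver Num.nneg -> b \is a polyOver Num.nneg ->
    (size a <= size (a + b)%R)%N.
  move=> /polyOverP a_ge0 /polyOverP b_ge0.
  have [->|a_neq0] := eqVneq a 0; first by rewrite size_poly0.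
  rewrite leqNgt (polySpred a_neq0) ltnS; apply/negP => small.
  have := nth_default 0 small; rewrite coefD => /eqP.
  rewrite paddr_eq0 -?nnegrE ?a_ge0 ?b_ge0 //.
  by move: a_neq0; rewrite -lead_coef_eq0 lead_coefE => /negPf ->.
move=> p_ge0 q_ge0; apply/eqP; rewrite eqn_leq size_polyD geq_max.
by rewrite size_le // addrC size_le.
Qed.

Lemma stern_nneg_neq0 {n : nat} : (0 < n)%N ->
  stern n \is a polyOver Num.nneg /\ stern n != 0.
Proof.
move: n; apply: pos_half_ind.
- by rewrite stern1 -polyC1 polyOverC rpred1 polyC_eq0 oner_neq0.
- move=> m m_gt0 IH; have [m_ge0 m_neq0] := IH m m_gt0 (leqnn m).
  rewrite stern_even // mulf_neq0 ?polyX_eq0 //; split=> //.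
  apply/polyOverP => i; rewrite coefXM.
  by case: ifP => _; rewrite ?rpred0 ?(polyOverP m_ge0).
- move=> m m_gt0 IH; have [m_ge0 m_neq0] := IH m m_gt0 (leqnSn m).
  have [m1_ge0 _] := IH m.+1 isT (leqnn _).
  rewrite stern_odd //; split.
    apply/polyOverP => i.
    by rewrite coefD rpredD ?(polyOverP m_ge0) ?(polyOverP m1_ge0).
  rewrite -size_poly_gt0 size_add_nneg // (leq_trans _ (leq_maxl _ _)) //.
  by rewrite size_poly_gt0.
Qed.

End SternDegree.

Lemma e1 : e 1 = 0.
Proof. by rewrite /e stern1 size_poly1. Qed.

Lemma e_double m : 0 < m -> e m.*2 = (e m).+1.
Proof.
move=> m_gt0; have [_ m_neq0] := stern_nneg_neq0 m_gt0.
by rewrite /e stern_even // mulrC size_mulX // -polySpred.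
Qed.

Lemma e_double_succ m : 0 < m -> e m.*2.+1 = maxn (e m) (e m.+1).
Proof.
move=> m_gt0; have [m_ge0 m_neq0] := stern_nneg_neq0 m_gt0.
have [m1_ge0 m1_neq0] := stern_nneg_neq0 (ltn0Sn m).
rewrite /e stern_odd // size_add_nneg //.
move: m_neq0 m1_neq0; rewrite -!size_poly_gt0; lia.
Qed.

Lemma e2 : e 2 = 1.
Proof. by rewrite (@e_double 1) // e1. Qed.

Lemma e_lipschitz {n : nat} : 0 < n -> e n.+1 <= (e n).+1 /\ e n <= (e n.+1).+1.
Proof.
move: n; apply: pos_half_ind; first by rewrite e1 e2.
- move=> m m_gt0 IH; have := IH m m_gt0 (leqnn m).
  by rewrite e_double_succ // e_double //; lia.
- move=> m m_gt0 IH; have := IH m m_gt0 (leqnSn m).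
  by rewrite -doubleS e_double // e_double_succ //; lia.
Qed.

Lemma e_bound {n : nat} : 0 < n -> n < (4 ^ e n).*2.
Proof.
move: n; apply: pos_half_ind; first by rewrite e1.
- move=> m m_gt0 IH; have := IH m m_gt0 (leqnn m).
  by rewrite e_double // expnS; lia.
- move=> m m_gt0 IH; rewrite e_double_succ //.
  set E := maxn (e m) (e m.+1).
  have [j /andP[j_gt0 le_jm] j2_near] := even_neighbour m_gt0.
  have ej_lt : (e j).+1 <= E.
    by rewrite -e_double //; case: j2_near => ->; rewrite ?leq_maxl ?leq_maxr.
  have := leq_pexp2l (isT : 0 < 4) ej_lt; have := IH j j_gt0 (leqW le_jm).
  rewrite expnS; lia.
Qed.

Lemma e_bounded {k i : nat} : 0 < i -> e i <= k -> i < (4 ^ k).*2.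
Proof.
move=> i_gt0 le_ek; apply: leq_trans (e_bound i_gt0) _.
by rewrite leq_double leq_pexp2l.
Qed.

Definition count_upto (P : pred nat) (N : nat) : nat := \sum_(1 <= i < N.+1) P i.

Lemma count_upto_double P N :
  count_upto P N.*2.+1 = P 1 + \sum_(1 <= m < N.+1) (P m.*2 + P m.*2.+1).
Proof.
rewrite /count_upto; elim: N => [|N IH]; first by rewrite big_nat1 big_geq ?addn0.
rewrite doubleS (big_nat_recr N.*2.+3) // (big_nat_recr N.*2.+2) // IH.
by rewrite (big_nat_recr N.+1) //= -doubleS !addnA.
Qed.

Lemma count_upto_succ P N :
  count_upto P N.+1 = P 1 + \sum_(1 <= m < N.+1) P m.+1.
Proof. exact: big_nat_recl. Qed.

Lemma count_upto_stable {P : pred nat} {B N M : nat} :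
  (forall i, B <= i -> ~~ P i) -> B <= N -> B <= M ->
  count_upto P N = count_upto P M.
Proof.
move=> P_out; have to_B N' : B <= N' -> count_upto P N' = count_upto P B.
  move=> le_BN; rewrite /count_upto (@big_cat_nat _ _ _ B.+1) //=.
  rewrite [X in _ + X]big_nat_cond [X in _ + X]big1 ?addn0 //.
  by move=> i /andP[/andP[lt_Bi _] _]; rewrite (negPf (P_out i (ltnW lt_Bi))).
by move=> le_BN le_BM; rewrite !to_B.
Qed.

Definition level (k : nat) : pred nat := fun i => e i == k.
Definition level_pair (k : nat) : pred nat := fun i => maxn (e i) (e i.+1) == k.

Lemma level_out k i : (4 ^ k).*2 <= i -> ~~ level k i.
Proof.
move=> le_Bi; apply/negP => /eqP ek.
have i_gt0 : 0 < i by apply: leq_trans le_Bi; rewrite double_gt0 expn_gt0.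
by have := e_bounded i_gt0 (eq_leq ek); rewrite ltnNge le_Bi.
Qed.

Lemma level_pair_out k i : (4 ^ k).*2 <= i -> ~~ level_pair k i.
Proof.
move=> le_Bi; apply/negP => /eqP ek.
have i_gt0 : 0 < i by apply: leq_trans le_Bi; rewrite double_gt0 expn_gt0.
have le_ek : e i <= k by rewrite -ek leq_maxl.
by have := e_bounded i_gt0 le_ek; rewrite ltnNge le_Bi.
Qed.

Lemma count_level_double k N :
  count_upto (level k.+1) N.*2.+1 =
  count_upto (level k) N + count_upto (level_pair k.+1) N.
Proof.
rewrite count_upto_double /level e1 add0n -big_split.
by apply: eq_big_nat => m /andP[m_gt0 _]; rewrite e_double // e_double_succ.
Qed.

Lemma e_pair_double m : 0 < m -> maxn (e m.*2) (e m.*2.+1) = (e m).+1.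
Proof.
move=> m_gt0; have [le_m1 _] := e_lipschitz m_gt0.
by rewrite e_double // e_double_succ //; lia.
Qed.

Lemma e_pair_double_succ m : 0 < m -> maxn (e m.*2.+1) (e m.+1.*2) = (e m.+1).+1.
Proof.
move=> m_gt0; have [_ le_m] := e_lipschitz m_gt0.
by rewrite e_double // e_double_succ //; lia.
Qed.

Lemma count_level_pair_double k N :
  count_upto (level_pair k.+1) N.*2.+1 =
  count_upto (level k) N + count_upto (level k) N.+1.
Proof.
rewrite count_upto_double count_upto_succ /level_pair /level e1 e2 max0n.
under eq_big_nat => m /andP[m_gt0 _].
  by rewrite -doubleS e_pair_double // e_pair_double_succ // !eqSS; over.
rewrite big_split /= /count_upto -[1]/0.+1 eqSS; lia.
Qed.

Lemma count_level k N : (4 ^ k).*2 <= N -> count_upto (level k) N = 3 ^ k.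
Proof.
elim: k N => [|k IH] N le_BN.
  rewrite (count_upto_stable (level_out 0) le_BN (leqnn 2)).
  by rewrite /count_upto big_nat_recr // big_nat1 /level e1 e2.
set B := (4 ^ k.+1).*2.
have le_kB : (4 ^ k).*2 <= B by rewrite leq_double leq_pexp2l.
have le_B2B : B <= B.*2.+1 by rewrite -addnn leqW ?leq_addl.
rewrite (count_upto_stable (level_out k.+1) le_BN le_B2B) count_level_double.
rewrite (count_upto_stable (level_pair_out k.+1) (leqnn B) le_B2B).
by rewrite count_level_pair_double !IH ?(leq_trans le_kB) // expnS; lia.
Qed.

Theorem theorem4p1 (k : nat) :
  exists s : seq nat,
    [/\ uniq s, size s = (3 ^ k)%N &
        forall i : nat, (i \in s) = (0 < i)%N && (e i == k)].
Proof.
(* All i with e(i) = k lie below B, by e_bounded. *)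
set B := (4 ^ k).*2.
exists [seq i <- iota 1 B | level k i]; split.
- by rewrite filter_uniq // iota_uniq.
- rewrite size_filter -(@count_level k B) // -sum1_count big_mkcond.
  rewrite /count_upto /index_iota subSS subn0.
  by apply: eq_bigr => i _; case: (level k i).
- move=> i; rewrite mem_filter mem_iota add1n ltnS /level.
  case: eqP => [ek | _]; last by rewrite andbF.
  rewrite andbT; case: (ltnP 0 i) => //= i_gt0.
  by apply/ltnW/e_bounded; rewrite ?ek.
Qed.
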